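(* Let $\mathcal{T}_{\mathcal{I}\times\mathcal{J}}$ be a $C_{\mathrm{sp}}$-sparse block tree for the cluster trees $\mathcal{T}_{\mathcal{I}}$ and $\mathcal{T}_{\mathcal{J}}$, and let $\mathcal{T}_x$ be a subtree of $\mathcal{T}_{\mathcal{J}}$. Let $\mathcal{B}\subseteq\mathcal{T}_{\mathcal{I}\times\mathcal{J}}$ be the smallest set of blocks such that $(\mathrm{root}(\mathcal{T}_{\mathcal{I}}),\mathrm{root}(\mathcal{T}_{\mathcal{J}}))\in\mathcal{B}$ and such that whenever $b=(t,s)\in\mathcal{B}$, $b$ is not a leaf of $\mathcal{T}_{\mathcal{I}\times\mathcal{J}}$, and $s$ is not a leaf of $\mathcal{T}_x$, all sons of $b$ in $\mathcal{T}_{\mathcal{I}\times\mathcal{J}}$ belong to $\mathcal{B}$. Let $\mathcal{T}_y := \{t\in\mathcal{T}_{\mathcal{I}} : (t,s)\in\mathcal{B}\text{ for some } s\}$. Then $s\in\mathcal{T}_x$ for every $(t,s)\in\mathcal{B}$, $\mathcal{T}_y$ is a subtree of $\mathcal{T}_{\mathcal{I}}$, and $$\#\mathcal{B}\le C_{\mathrm{sp}}\,\#\mathcal{T}_x,\qquad \#\mathcal{T}_y\le C_{\mathrm{sp}}\,\#\mathcal{T}_x.$$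
   Context: A cluster tree for a finite index set $\mathcal{I}$ is a finite rooted tree $\mathcal{T}_{\mathcal{I}}$ whose nodes $t$ (clusters) carry labels $\hat t\subseteq\mathcal{I}$, such that the root is labeled $\mathcal{I}$ and, for every cluster $t$ with a nonempty set $\mathrm{sons}(t)$ of sons, $\hat t$ is the disjoint union of the labels of its sons. A subtree $\mathcal{T}_x$ of $\mathcal{T}_{\mathcal{J}}$ is a set of clusters of $\mathcal{T}_{\mathcal{J}}$ containing the root, forming a tree with the same labels, such that every cluster of $\mathcal{T}_x$ has in $\mathcal{T}_x$ either no sons or exactly all of its sons in $\mathcal{T}_{\mathcal{J}}$; leaves of $\mathcal{T}_x$ are clusters without sons in $\mathcal{T}_x$. A block tree $\mathcal{T}_{\mathcal{I}\times\mathcal{J}}$ for $\mathcal{T}_{\mathcal{I}}$ and $\mathcal{T}_{\mathcal{J}}$ is a finite rooted tree whose nodes (blocks) are pairs $b=(t,s)$ with $t\in\mathcal{T}_{\mathcal{I}}$, $s\in\mathcal{T}_{\mathcal{J}}$ and label $\hat t\times\hat s$, whose root is $(\mathrm{root}(\mathcal{T}_{\mathcal{I}}),\mathrm{root}(\mathcal{T}_{\mathcal{J}}))$, and such that every non-leaf block $(t,s)$ has sons $\mathrm{sons}(t)\times\mathrm{sons}(s)$ (both nonempty). It is $C_{\mathrm{sp}}$-sparse if $\#\{s:(t,s)\in\mathcal{T}_{\mathcal{I}\times\mathcal{J}}\}\le C_{\mathrm{sp}}$ for all $t\in\mathcal{T}_{\mathcal{I}}$ and $\#\{t:(t,s)\in\mathcal{T}_{\mathcal{I}\times\mathcal{J}}\}\le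 C_{\mathrm{sp}}$ for all $s\in\mathcal{T}_{\mathcal{J}}$. *)

From mathcomp Require Import all_boot.
Set Implicit Arguments. Unset Strict Implicit. Unset Printing Implicit Defensive.

(* A finite rooted tree on the finite node type C is given by a root and a
   parent map; every node reaches the root by iterating the parent map,
   and the root has no parent. *)
Definition sons (C : finType) (par : C -> option C) (t : C) : {set C} :=
  [set u | par u == Some t].

Definition is_rooted_tree (C : finType) (root : C) (par : C -> option C) : Prop :=
  par root = None /\
  forall t : C, exists n, iter n (obind par) (Some t) = Some root.

Definition is_cluster_tree (I C : finType) (root : C) (par : C -> option C)
    (label : C -> {set I}) : Prop :=
  [/\ is_rooted_tree root par,
      label root = [set: I] &
      forall t : C, sons par t != set0 ->
        label t = \bigcup_(u in sons par t) label u /\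
        (forall u v, u \in sons par t -> v \in sons par t -> u != v ->
           [disjoint label u & label v])].

Definition bsons (C1 C2 : finType) (par1 : C1 -> option C1) (par2 : C2 -> option C2)
    (BT : {set C1 * C2}) (b : C1 * C2) : {set C1 * C2} :=
  [set b' in BT | (par1 b'.1 == Some b.1) && (par2 b'.2 == Some b.2)].

Definition is_block_tree (C1 C2 : finType) (root1 : C1) (par1 : C1 -> option C1)
    (root2 : C2) (par2 : C2 -> option C2) (BT : {set C1 * C2}) : Prop :=
  [/\ (root1, root2) \in BT,
      (forall b, b \in BT -> b != (root1, root2) ->
         exists t' s', [/\ par1 b.1 = Some t', par2 b.2 = Some s' & (t', s') \in BT]) &
      (forall b, b \in BT ->
         bsons par1 par2 BT b = set0 \/
         [/\ sons par1 b.1 != set0, sons par2 b.2 != set0 &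
             bsons par1 par2 BT b = setX (sons par1 b.1) (sons par2 b.2)])].

Definition is_sparse (C1 C2 : finType) (Csp : nat) (BT : {set C1 * C2}) : Prop :=
  (forall t : C1, #|[set s | (t, s) \in BT]| <= Csp) /\
  (forall s : C2, #|[set t | (t, s) \in BT]| <= Csp).

Definition is_subtree (C : finType) (root : C) (par : C -> option C) (X : {set C}) : Prop :=
  [/\ root \in X,
      (forall t, t \in X -> t != root -> exists u, par t = Some u /\ u \in X) &
      (forall t, t \in X -> sons par t :&: X = set0 \/ sons par t \subset X)].

Definition leaf_in (C : finType) (par : C -> option C) (X : {set C}) (t : C) : bool :=
  (t \in X) && (sons par t :&: X == set0).

Definition B_closed (C1 C2 : finType) (root1 : C1) (par1 : C1 -> option C1)
    (root2 : C2) (par2 : C2 -> option C2) (BT : {set C1 * C2}) (X : {set C2})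
    (S : {set C1 * C2}) : bool :=
  ((root1, root2) \in S) &&
  [forall b in S, (bsons par1 par2 BT b != set0) ==> ~~ leaf_in par2 X b.2 ==>
    (bsons par1 par2 BT b \subset S)].

Definition Bset (C1 C2 : finType) (root1 : C1) (par1 : C1 -> option C1)
    (root2 : C2) (par2 : C2 -> option C2) (BT : {set C1 * C2}) (X : {set C2})
    : {set C1 * C2} :=
  \bigcap_(S : {set C1 * C2} | (S \subset BT) && B_closed root1 par1 root2 par2 BT X S) S.

Definition Tyset (C1 C2 : finType) (B : {set C1 * C2}) : {set C1} :=
  [set t | [exists s, (t, s) \in B]].

(* B is the least closed set of blocks, so every property preserved by the
   closure rule holds on B: its column clusters stay in X because a column
   that is not a leaf of the subtree X has all its sons in X, and every block
   other than the root is a son of a block of B at which the rule fired.  The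
   latter gives the subtree property of T_y: a son of a row cluster of B comes
   from an expanded block, whose sons cover sons(t) x sons(s).  For the
   counting, each column s of X carries at most Csp blocks of B by sparsity,
   and T_y is the image of B under the first projection. *)
From mathcomp Require Import all_boot.

Set Implicit Arguments.
Unset Strict Implicit.
Unset Printing Implicit Defensive.

Lemma card_le_sparse_col (C1 C2 : finType) (Csp : nat) (S : {set C1 * C2})
    (X : {set C2}) :
  (forall s, #|[set t | (t, s) \in S]| <= Csp) ->
  (forall t s, (t, s) \in S -> s \in X) ->
  #|S| <= Csp * #|X|.
Proof.
move=> col_le inX.
rewrite -sum1_card (partition_big (fun b : C1 * C2 => b.2) (mem X)); last first.
  by case=> t s /inX.
rewrite mulnC -sum_nat_const; apply: leq_sum => s _.
rewrite sum1dep_card; apply: leq_trans (col_le s).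
apply: leq_trans (leq_imset_card (fun t => (t, s)) _).
apply: subset_leq_card; apply/subsetP=> -[t s']; rewrite inE => /andP[Sts /eqP/= <-].
by apply/imsetP; exists t; rewrite ?inE.
Qed.

Lemma card_Tyset_le (C1 C2 : finType) (S : {set C1 * C2}) : #|Tyset S| <= #|S|.
Proof.
apply: leq_trans (leq_imset_card (fun b : C1 * C2 => b.1) S).
apply: subset_leq_card; apply/subsetP=> t; rewrite inE => /existsP[s Sts].
by apply/imsetP; exists (t, s).
Qed.

Section Bset.
Variables (C1 C2 : finType) (root1 : C1) (par1 : C1 -> option C1)
  (root2 : C2) (par2 : C2 -> option C2) (BT : {set C1 * C2}) (X : {set C2}).

Local Notation B := (Bset root1 par1 root2 par2 BT X).
Local Notation closed := (B_closed root1 par1 root2 par2 BT X).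
Local Notation bs := (bsons par1 par2 BT).
Local Notation expands b := ((bs b != set0) && ~~ leaf_in par2 X b.2).

Hypothesis rootBT : (root1, root2) \in BT.

Lemma bsons_sub b : bs b \subset BT.
Proof. by apply/subsetP=> c; rewrite inE => /andP[]. Qed.

Lemma Bset_min (S : {set C1 * C2}) : S \subset BT -> closed S -> B \subset S.
Proof. by move=> sub_S closed_S; apply: (bigcap_inf S); rewrite sub_S closed_S. Qed.

Lemma Bset_closed : closed B.
Proof.
apply/andP; split; first by apply/bigcapP=> S /andP[_ /andP[]].
apply/forall_inP=> b Bb; apply/implyP=> nz_bs; apply/implyP=> not_leaf.
apply/subsetP=> c bs_c; apply/bigcapP=> S S_ok.
have Sb : b \in S by move/bigcapP: Bb; apply.
case/and3P: S_ok => _ _ /forall_inP closed_S.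
by move: (closed_S b Sb); rewrite nz_bs not_leaf => /subsetP; apply.
Qed.

Lemma Bset_root : (root1, root2) \in B.
Proof. by case/andP: Bset_closed. Qed.

Lemma Bset_bsons b : b \in B -> expands b -> bs b \subset B.
Proof.
move=> Bb /andP[nz_bs not_leaf].
by case/andP: Bset_closed => _ /forall_inP /(_ b Bb); rewrite nz_bs not_leaf.
Qed.

Lemma Bset_sub : B \subset BT.
Proof.
apply: Bset_min => //; rewrite /B_closed rootBT /=.
by apply/forall_inP=> b _; rewrite bsons_sub !implybT.
Qed.

Lemma Bset_parent b : b \in B -> b != (root1, root2) ->
  exists2 p, p \in B & expands p && (b \in bs p).
Proof.
pose S := (root1, root2) |: \bigcup_(p in B | expands p) bs p.
suff /subsetP B_S : B \subset S.
  move=> /B_S; rewrite in_setU1 => /orP[-> //|/bigcupP[p /andP[Bp exp_p] bs_p_b] _].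
  by exists p; rewrite ?exp_p ?bs_p_b.
have S_B : S \subset B.
  apply/subsetP=> c; rewrite in_setU1 => /orP[/eqP-> | /bigcupP[p /andP[Bp exp_p]]].
    exact: Bset_root.
  by apply/subsetP/Bset_bsons.
apply: Bset_min; first exact: subset_trans S_B Bset_sub.
rewrite /B_closed setU11 /=; apply/forall_inP=> a Sa.
apply/implyP=> nz_bs; apply/implyP=> not_leaf; apply/subsetP=> c bs_c.
by rewrite in_setU1; apply/orP; right; apply/bigcupP; exists a;
  rewrite ?(subsetP S_B) ?nz_bs ?not_leaf.
Qed.

Lemma Bset_col_in_subtree : is_subtree root2 par2 X ->
  forall t s, (t, s) \in B -> s \in X.
Proof.
case=> rootX _ sons_X.
pose S := [set b in B | b.2 \in X].
suff /subsetP B_S : B \subset S by move=> t s /B_S; rewrite inE => /andP[].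
apply: Bset_min.
  by apply/subsetP=> c; rewrite inE => /andP[/(subsetP Bset_sub)].
rewrite /B_closed inE Bset_root rootX /=.
apply/forall_inP=> b; rewrite inE => /andP[Bb Xb2].
apply/implyP=> nz_bs; apply/implyP=> not_leaf; apply/subsetP=> c bs_c.
rewrite inE (subsetP (Bset_bsons Bb _)) ?nz_bs ?not_leaf //=.
move: not_leaf; rewrite /leaf_in Xb2 /= => /negbTE nz_sonsX.
case: (sons_X _ Xb2) => [/eqP | sub_sons]; first by rewrite nz_sonsX.
by move: bs_c; rewrite inE => /and3P[_ _ par_c2]; apply: (subsetP sub_sons); rewrite inE.
Qed.

Hypothesis HBT : is_block_tree root1 par1 root2 par2 BT.
Hypothesis par_root1 : par1 root1 = None.

Lemma Tyset_parent t : t \in Tyset B -> t != root1 ->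
  exists u, par1 t = Some u /\ u \in Tyset B.
Proof.
rewrite inE => /existsP[s Bts] t_nroot.
have [|p Bp /andP[_ bs_ts]] := Bset_parent Bts; first by apply: contra t_nroot => /eqP[->].
exists p.1; move: bs_ts; rewrite inE => /and3P[_ /eqP-> _]; split=> //.
by rewrite inE; apply/existsP; exists p.2; case: p Bp.
Qed.

Lemma Tyset_sons t :
  sons par1 t :&: Tyset B = set0 \/ sons par1 t \subset Tyset B.
Proof.
have [/eqP | ] := boolP (sons par1 t :&: Tyset B == set0); first by left.
case/set0Pn=> u; rewrite !inE => /andP[/eqP par_u /existsP[s Bus]]; right.
have [|p Bp /andP[exp_p bs_us]] := Bset_parent Bus.
  by apply/eqP=> -[u_root _]; rewrite u_root par_root1 in par_u.
move: (bs_us); rewrite inE => /and3P[_ /eqP/= par_u' _].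
have p1_t : p.1 = t by move: par_u'; rewrite par_u => -[].
have [_ _ /(_ p (subsetP Bset_sub p Bp))] := HBT.
case=> [bs0 | [_ /set0Pn[s2 sons_s2] bs_p]]; first by rewrite bs0 eqxx in exp_p.
apply/subsetP=> v sons_v; rewrite inE; apply/existsP; exists s2.
by apply: (subsetP (Bset_bsons Bp exp_p)); rewrite bs_p inE /= p1_t sons_v.
Qed.

Lemma Tyset_subtree : is_subtree root1 par1 (Tyset B).
Proof.
split; [|exact: Tyset_parent|by move=> t _; apply: Tyset_sons].
by rewrite inE; apply/existsP; exists root2; apply: Bset_root.
Qed.

End Bset.

Theorem mainTheorem6 (I J C1 C2 : finType)
  (root1 : C1) (par1 : C1 -> option C1) (lab1 : C1 -> {set I})
  (root2 : C2) (par2 : C2 -> option C2) (lab2 : C2 -> {set J})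
  (HI : is_cluster_tree root1 par1 lab1)
  (HJ : is_cluster_tree root2 par2 lab2)
  (BT : {set C1 * C2}) (HBT : is_block_tree root1 par1 root2 par2 BT)
  (Csp : nat) (Hsp : is_sparse Csp BT)
  (X : {set C2}) (HX : is_subtree root2 par2 X) :
  let B := Bset root1 par1 root2 par2 BT X in
  let Ty := Tyset B in
  [/\ (forall t s, (t, s) \in B -> s \in X),
      is_subtree root1 par1 Ty,
      #|B| <= Csp * #|X| &
      #|Ty| <= Csp * #|X|].
Proof.
move=> B Ty; have [rootBT _ _] := HBT; have [[par_root1 _] _ _] := HI.
have col_in_X := Bset_col_in_subtree (par1 := par1) rootBT HX.
have card_B : #|B| <= Csp * #|X|.
  apply: (card_le_sparse_col _ col_in_X) => s.
  apply: leq_trans (proj2 Hsp s); apply: subset_leq_card.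
  by apply/subsetP=> t; rewrite !inE; apply: (subsetP (Bset_sub par1 par2 X rootBT)).
split=> //; first exact: Tyset_subtree X rootBT HBT par_root1.
exact: leq_trans (card_Tyset_le B) card_B.
Qed.
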